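(* Let $k>t+1$, $n>2k-t$, and let $\mathcal{S}_a$ be a maximal set of $k$-spaces in $\mathrm{AG}(n,q)$ pairwise intersecting in at least a $t$-space. Let $\psi(\mathcal{S}_a)=\min\{\dim T: T\text{ an affine subspace of }\mathrm{AG}(n,q),\ \dim(T\cap\alpha)\geq t\ \forall\alpha\in\mathcal{S}_a\}$ and let $\mathcal{T}$ be the set of all affine $\psi(\mathcal{S}_a)$-dimensional subspaces meeting every element of $\mathcal{S}_a$ in at least a $t$-space. Then: (1) $t\leq\psi(\mathcal{S}_a)\leq k$, and if $\psi(\mathcal{S}_a)=t$ then $\mathcal{S}_a$ is a $t$-pencil; (2) if $T\in\mathcal{T}$, all affine $k$-spaces containing $T$ belong to $\mathcal{S}_a$; (3) any two elements of $\mathcal{T}$ intersect (in $\mathrm{AG}(n,q)$) in at least a $t$-space.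
   Context: Affine subspaces intersect in at least a $t$-space if their affine intersection has dimension at least $t$. A $t$-pencil is the set of all affine $k$-spaces through a fixed affine $t$-space. Maximal means no further affine $k$-space can be added keeping the property. *)

(* AG(n,q) = points 'rV[F]_n over a finite field F (|F| = q). *)
From HB Require Import structures.
From mathcomp Require Import all_boot all_order all_algebra all_field.
Set Implicit Arguments. Unset Strict Implicit. Unset Printing Implicit Defensive.
Import GRing.Theory.
Local Open Scope ring_scope.

Section AG.
Variables (F : finFieldType) (n : nat).
Local Notation pt := 'rV[F]_n.

Definition is_aff (A : {set pt}) (d : nat) : Prop :=
  exists (p : pt) (U : {vspace pt}), (\dim U = d)%N /\ A = [set x | (x - p) \in U].

(* The (affine) intersection of A and B has dimension at least t, i.e. A ∩ B
   contains an affine t-space (intersections of affine subspaces are affine). *)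
Definition meets_ge (A B : {set pt}) (t : nat) : Prop :=
  exists C, is_aff C t /\ C \subset A :&: B.

Definition t_intersecting (k t : nat) (S : {set {set pt}}) : Prop :=
  (forall A, A \in S -> is_aff A k) /\
  (forall A B, A \in S -> B \in S -> meets_ge A B t).

Definition maximal_t_intersecting (k t : nat) (S : {set {set pt}}) : Prop :=
  t_intersecting k t S /\
  (forall B, is_aff B k -> B \notin S -> ~ t_intersecting k t (B |: S)).

Definition t_blocking (t : nat) (S : {set {set pt}}) (T : {set pt}) : Prop :=
  forall A, A \in S -> meets_ge T A t.

Definition is_psi (t : nat) (S : {set {set pt}}) (psi : nat) : Prop :=
  (exists T, is_aff T psi /\ t_blocking t S T) /\
  (forall d T, is_aff T d -> t_blocking t S T -> (psi <= d)%N).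

Definition is_pencil (k t : nat) (S : {set {set pt}}) : Prop :=
  exists P, is_aff P t /\ (forall A, A \in S <-> (is_aff A k /\ P \subset A)).

End AG.

From mathcomp Require Import all_boot all_order all_algebra all_field.
From mathcomp Require Import zify.
Set Implicit Arguments. Unset Strict Implicit. Unset Printing Implicit Defensive.
Import GRing.Theory.
Local Open Scope ring_scope.

(* Two flats p + U and q + V share a
   t-flat iff q - p lies in U + V and dim (U :&: V) >= t.  By maximality, any
   k-flat containing a flat T that meets every member of S in a t-flat belongs
   to S.  Hence S is nonempty, members of S give psi <= k, and if psi = t the
   t-flat T lies inside each member, so S is the pencil through T.  If two
   minimal such flats T1, T2 shared no t-flat, then, because 2k < n + t, they
   could be enlarged one direction at a time to k-flats still sharing no
   t-flat; both would lie in S, contradicting that S is t-intersecting. *)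

Section Subspaces.
Variables (K : fieldType) (vT : vectType K).
Implicit Types (U V W : {vspace vT}) (v x : vT).

Lemma exists_subspace_dim U d :
  (d <= \dim U)%N -> exists2 Y : {vspace vT}, (Y <= U)%VS & \dim Y = d.
Proof.
move=> le_dU; have /andP[/eqP spanU freeU] := vbasisP U.
have free_take : free (take d (vbasis U)).
  by apply: (@catl_free _ _ (drop d (vbasis U))); rewrite cat_take_drop freeU.
exists <<take d (vbasis U)>>%VS.
  by apply/span_subvP => x /mem_take x_basis; rewrite -spanU; apply: memv_span.
by rewrite (eqP free_take) size_take size_tuple; case: ltngtP le_dU => // ->.
Qed.

Lemma exists_notin_subspace U : (\dim U < \dim {:vT})%N -> exists x, x \notin U.
Proof.
move=> ltU; have /subvPn[x _ xU] : ~~ (fullv <= U)%VS.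
  by apply: contraTN ltU => /dimvS; rewrite -leqNgt.
by exists x.
Qed.

Lemma dim_add_line U x : x \notin U -> \dim (U + <[x]>) = (\dim U).+1.
Proof.
move=> xU; rewrite dimv_disjoint_sum ?dim_vline ?addn1; last first.
  apply/eqP; rewrite -subv0; apply/subvP => y; rewrite memv_cap memv0.
  case/andP=> yU /vlineP[a def_y]; move: yU; rewrite def_y.
  by rewrite rpredZeq (negPf xU) orbF => /eqP->; rewrite scale0r.
have -> : x != 0 by apply: contraNneq xU => ->; rewrite mem0v.
by rewrite addn1.
Qed.

Lemma memv_add_line_exchange W x v :
  v \notin W -> v \in (W + <[x]>)%VS -> x \in (W + <[v]>)%VS.
Proof.
move=> vW /memv_addP[w wW [_ /vlineP[a ->] def_v]].
have nz_a : a != 0 by apply: contraNneq vW => a0; rewrite def_v a0 scale0r addr0.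
have -> : x = - a^-1 *: w + a^-1 *: v.
  by rewrite def_v scalerDr addrA scaleNr addNr add0r scalerA mulVf ?scale1r.
by apply: memv_add; rewrite memvZ ?memv_line.
Qed.

(* [flats_meet t v U V] says that the flats [U] and [v + V] share a flat of
   dimension [t]. *)
Definition flats_meet t v U V := (v \in (U + V)%VS) && (t <= \dim (U :&: V))%N.

Lemma flats_meetC t v U V : flats_meet t v U V = flats_meet t v V U.
Proof. by rewrite /flats_meet addvC capvC. Qed.

Section Growth.
Variables k t : nat.
Hypotheses (k_le_dim : (k <= \dim {:vT})%N) (two_k_lt : (2 * k < \dim {:vT} + t)%N).

Lemma flats_apart_add_line U V v :
  (\dim U < k)%N -> (\dim V <= k)%N -> ~~ flats_meet t v U V ->
  exists2 x, x \notin U & ~~ flats_meet t v (U + <[x]>) V.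
Proof.
move=> ltUk leVk apart.
have sumUxV x : (U + <[x]> + V = U + V + <[x]>)%VS.
  by rewrite -!addvA (addvC <[x]>%VS).
(* If U + V + <[v]> is everything, any new direction keeps the sum with V
   full, leaving an intersection of dimension at most 2k - dim < t; otherwise
   a direction outside U + V + <[v]> changes neither v's membership in the
   sum nor the dimension of the intersection. *)
have [Z_full | Z_small] := eqVneq (U + V + <[v]>)%VS fullv.
- have [x xU] := exists_notin_subspace (leq_trans ltUk k_le_dim).
  exists x => //; apply/negP => /andP[v_in ge_t].
  have full : (\dim {:vT} <= \dim (U + <[x]> + V))%N.
    rewrite -Z_full dimvS // sumUxV subv_add addvSl /= -memvE -sumUxV.
    exact: v_in.
  have := dimv_sum_cap (U + <[x]>) V; rewrite dim_add_line //; lia.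
- have : (\dim (U + V + <[v]>) < \dim {:vT})%N.
    by rewrite (ltn_leqif (dimv_leqif_eq (subvf _))).
  case/exists_notin_subspace=> x xZ.
  have xUV : x \notin (U + V)%VS by apply: contra xZ; apply/subvP/addvSl.
  have xU : x \notin U by apply: contra xUV; apply/subvP/addvSl.
  exists x => //; apply: contra apart => /andP[v_in ge_t]; apply/andP; split.
    apply: contraNT xZ => vUV; apply: memv_add_line_exchange vUV _.
    by rewrite -sumUxV.
  have := dimv_sum_cap (U + <[x]>) V; have := dimv_sum_cap U V.
  rewrite sumUxV !dim_add_line //; lia.
Qed.

Lemma flats_apart_grow_l U V v :
  (\dim U <= k)%N -> (\dim V <= k)%N -> ~~ flats_meet t v U V ->
  exists W, [/\ (U <= W)%VS, \dim W = k & ~~ flats_meet t v W V].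
Proof.
move=> + leVk; move def_m: (k - \dim U)%N => m.
elim: m U def_m => [|m IHm] U def_m leUk apart.
  by exists U; split=> //; lia.
have ltUk : (\dim U < k)%N by lia.
have [x xU apart_x] := flats_apart_add_line ltUk leVk apart.
have dimUx := dim_add_line xU.
have [W [UxW dimW apartW]] := IHm (U + <[x]>)%VS ltac:(lia) ltac:(lia) apart_x.
by exists W; split=> //; apply: subv_trans UxW; apply: addvSl.
Qed.

Lemma flats_apart_grow U1 U2 v :
  (\dim U1 <= k)%N -> (\dim U2 <= k)%N -> ~~ flats_meet t v U1 U2 ->
  exists W1 W2, [/\ (U1 <= W1)%VS, (U2 <= W2)%VS, \dim W1 = k, \dim W2 = k
                  & ~~ flats_meet t v W1 W2].
Proof.
move=> leU1k leU2k apart.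
have [W1 [sub1 dim1 apart1]] := flats_apart_grow_l leU1k leU2k apart.
rewrite flats_meetC in apart1.
have [W2 [sub2 dim2 apart2]] := flats_apart_grow_l leU2k (eq_leq dim1) apart1.
by exists W1, W2; rewrite flats_meetC.
Qed.

End Growth.
End Subspaces.

Section Flats.
Variables (F : finFieldType) (n : nat).
Local Notation pt := 'rV[F]_n.
Local Notation flat p U := [set x : pt | x - p \in (U : {vspace pt})].
Implicit Types (A B C T : {set pt}) (p q c : pt) (U V W Uc : {vspace pt}).

Lemma dim_rowv : \dim {:pt} = n.
Proof. by rewrite dimvf /dim /= mul1n. Qed.

Lemma flat_subsetP c p Uc U :
  reflect ((Uc <= U)%VS /\ c - p \in U) (flat c Uc \subset flat p U).
Proof.
apply: (iffP subsetP) => [sub | [/subvP sUcU cpU] x].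
  have cpU : c - p \in U by have := sub c; rewrite !inE subrr mem0v; apply.
  split=> //; apply/subvP => u uUc.
  have := sub (c + u); rewrite !inE !(addrAC c u) subrr add0r.
  by rewrite (rpredDl _ cpU); apply.
rewrite !inE => /sUcU xcU.
have -> : x - p = (x - c) + (c - p) by rewrite addrA subrK.
exact: rpredD.
Qed.

Lemma flat_eq p q U : q - p \in U -> flat q U = flat p U.
Proof.
move=> qpU; apply/eqP; rewrite eqEsubset.
by apply/andP; split; apply/flat_subsetP; rewrite subvv // -opprB memvN.
Qed.

Lemma is_aff_subset_dim C T d e :
  is_aff C d -> is_aff T e -> C \subset T -> (d <= e)%N.
Proof. by move=> [c [Uc [<- ->]]] [p [U [<- ->]]] /flat_subsetP[/dimvS]. Qed.

Lemma is_aff_subset_eq C T d : is_aff C d -> is_aff T d -> C \subset T -> C = T.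
Proof.
move=> [c [Uc [dUc ->]]] [p [U [dU ->]]] /flat_subsetP[sUcU cpU].
have -> : Uc = U by apply/eqP; rewrite eqEdim sUcU dUc dU /=.
exact: flat_eq.
Qed.

Lemma exists_is_aff d : (d <= n)%N -> exists B, is_aff B d.
Proof.
move=> le_dn; have := @exists_subspace_dim _ _ (fullv : {vspace pt}) d.
rewrite dim_rowv => /(_ le_dn)[U _ dU].
by exists (flat 0 U), 0, U.
Qed.

Lemma meets_ge_flatP t p q U V :
  reflect (meets_ge (flat p U) (flat q V) t) (flats_meet t (q - p) U V).
Proof.
apply: (iffP andP) => [[/memv_addP[u uU [w wV def_qp]] ge_t] | [C [affC]]].
  have [Y sYUV dY] := exists_subspace_dim ge_t.
  exists (flat (p + u) Y); split; first by exists (p + u), Y.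
  rewrite subsetI; apply/andP; split; apply/flat_subsetP; split.
  - exact: subv_trans sYUV (capvSl _ _).
  - by rewrite addrAC subrr add0r.
  - exact: subv_trans sYUV (capvSr _ _).
  - by rewrite -opprB memvN opprD addrA def_qp (addrC u) addrK.
case: affC => c [Uc [<- ->]].
rewrite subsetI => /andP[/flat_subsetP[sUcU cpU] /flat_subsetP[sUcV cqV]].
split; last by apply: dimvS; rewrite subv_cap sUcU.
have -> : q - p = (c - p) - (c - q) by rewrite opprB (addrC (c - p)) addrA subrK.
by apply: memv_add; rewrite ?memvN.
Qed.

Lemma meets_geC t A B : meets_ge A B t -> meets_ge B A t.
Proof. by case=> C [affC sub]; exists C; rewrite setIC. Qed.

Lemma meets_geSS t A B A' B' :
  A \subset A' -> B \subset B' -> meets_ge A B t -> meets_ge A' B' t.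
Proof.
move=> sAA' sBB' [C [affC sub]]; exists C; split=> //.
exact: subset_trans sub (setISS sAA' sBB').
Qed.

Lemma meets_ge_refl t d B : (t <= d)%N -> is_aff B d -> meets_ge B B t.
Proof.
move=> le_td [p [U [dU ->]]]; apply/meets_ge_flatP.
by rewrite /flats_meet subrr mem0v capvv dU.
Qed.

Lemma meets_ge_dim t d A T : is_aff T d -> meets_ge T A t -> (t <= d)%N.
Proof.
move=> affT [C [affC sub]].
exact: is_aff_subset_dim affC affT (subset_trans sub (subsetIl _ _)).
Qed.

Section Maximal.
Variables (k t : nat) (S : {set {set pt}}).
Hypotheses (le_tk : (t <= k)%N) (le_kn : (k <= n)%N).
Hypothesis maxS : maximal_t_intersecting k t S.

Lemma blocking_subset_mem T B :
  t_blocking t S T -> is_aff B k -> T \subset B -> B \in S.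
Proof.
case: maxS => [[affS interS] maxS'] blockT affB sTB.
apply/negPn/negP => notBS; apply: (maxS' B affB notBS).
have blockB A : A \in S -> meets_ge B A t.
  by move=> AS; apply: meets_geSS sTB (subxx A) (blockT A AS).
split=> [A | A A']; rewrite !in_setU1; first by case/orP=> [/eqP-> | /affS].
case/orP=> [/eqP-> | AS] /orP[/eqP-> | A'S].
- exact: meets_ge_refl affB.
- exact: blockB.
- exact/meets_geC/blockB.
- exact: interS.
Qed.

Lemma maximal_mem_blocking A : A \in S -> t_blocking t S A.
Proof. by move=> AS A' A'S; apply: maxS.1.2. Qed.

Lemma maximal_nonempty : exists A, A \in S.
Proof.
have [S0 | [A AS]] := set_0Vmem S; last by exists A.
have [B affB] := exists_is_aff le_kn.
by exists B; apply: blocking_subset_mem affB (subxx B) => A; rewrite S0 inE.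
Qed.

Lemma blocking_pencil T : is_aff T t -> t_blocking t S T -> is_pencil k t S.
Proof.
move=> affT blockT; exists T; split=> // A.
split=> [AS | [affA sTA]]; last exact: blocking_subset_mem sTA.
split; first exact: maxS.1.1.
have [C [affC sub]] := blockT A AS.
rewrite -(is_aff_subset_eq affC affT (subset_trans sub (subsetIl _ _))).
exact: subset_trans sub (subsetIr _ _).
Qed.

Lemma blocking_meets_ge T1 T2 d1 d2 :
  (2 * k < n + t)%N -> (d1 <= k)%N -> (d2 <= k)%N ->
  is_aff T1 d1 -> t_blocking t S T1 -> is_aff T2 d2 -> t_blocking t S T2 ->
  meets_ge T1 T2 t.
Proof.
move=> lt_2k le1 le2 [p1 [U1 [dU1 ->]]] block1 [p2 [U2 [dU2 ->]]] block2.
have growS p U W :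
    t_blocking t S (flat p U) -> (U <= W)%VS -> \dim W = k -> flat p W \in S.
  move=> blockU sUW dW; apply: blocking_subset_mem blockU _ _; first by exists p, W.
  by apply/flat_subsetP; rewrite subrr mem0v.
apply/meets_ge_flatP/negPn/negP => apart.
have le_k_dim : (k <= \dim {:pt})%N by rewrite dim_rowv.
have lt_2k_dim : (2 * k < \dim {:pt} + t)%N by rewrite dim_rowv.
rewrite -dU1 -dU2 in le1 le2.
have [W1 [W2 [sUW1 sUW2 dW1 dW2 apartW]]] :=
  flats_apart_grow le_k_dim lt_2k_dim le1 le2 apart.
have := maxS.1.2 _ _ (growS _ _ _ block1 sUW1 dW1) (growS _ _ _ block2 sUW2 dW2).
by move/meets_ge_flatP; rewrite (negPf apartW).
Qed.

End Maximal.
End Flats.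

Theorem mainTheorem11 (F : finFieldType) (n k t : nat)
  (S : {set {set 'rV[F]_n}}) (psi : nat) :
  (t.+1 < k)%N -> (2 * k - t < n)%N ->
  maximal_t_intersecting k t S ->
  is_psi t S psi ->
  [/\ ((t <= psi)%N /\ (psi <= k)%N /\ (psi = t -> is_pencil k t S)),
      (forall T, is_aff T psi -> t_blocking t S T ->
         forall B, is_aff B k -> T \subset B -> B \in S)
    & (forall T1 T2, is_aff T1 psi -> t_blocking t S T1 ->
         is_aff T2 psi -> t_blocking t S T2 -> meets_ge T1 T2 t)].
Proof.
move=> lt_t1k lt_n maxS [[T0 [affT0 blockT0]] psi_min].
have le_tk : (t <= k)%N by lia.
have le_kn : (k <= n)%N by lia.
have [A AS] := maximal_nonempty le_tk le_kn maxS.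
have le_psik : (psi <= k)%N.
  exact: psi_min (maxS.1.1 A AS) (maximal_mem_blocking maxS AS).
split.
- split; first exact: meets_ge_dim affT0 (blockT0 A AS).
  split=> // psi_t; rewrite psi_t in affT0.
  exact: blocking_pencil le_tk maxS T0 affT0 blockT0.
- by move=> T _ blockT B; apply: blocking_subset_mem le_tk maxS T B blockT.
- move=> T1 T2 aff1 block1 aff2 block2.
  have lt_2k : (2 * k < n + t)%N by lia.
  exact: (blocking_meets_ge le_tk le_kn maxS lt_2k le_psik le_psik
            aff1 block1 aff2 block2).
Qed.
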